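(* Let $d\ge 1$, $p\ge 1$, $\lambda>0$, and let $\mathbf{x}=(x_1,\dots,x_n)$ and $\mathbf{x}'=(x'_1,\dots,x'_{n'})$ be two time series with values in $\mathbb{R}^d$, with $p<n$ and $p<n'$. Set $N=n+n'-2p$, and define $\mathbf{X}=[X\;X']\in\mathbb{R}^{pd\times N}$, $\mathbf{Y}=[Y\;Y']\in\mathbb{R}^{d\times N}$ and the $N\times N$ diagonal matrix $$\Delta=\operatorname{diag}\Big(\underbrace{\tfrac{1}{2(n-p)},\dots,\tfrac{1}{2(n-p)}}_{n-p\text{ times}},\underbrace{\tfrac{1}{2(n'-p)},\dots,\tfrac{1}{2(n'-p)}}_{n'-p\text{ times}}\Big),$$ where $X,Y,X',Y'$ are as described in the context. Define the autoregressive kernel of order $p$ and degrees of freedom $\lambda$ by $$k(\mathbf{x},\mathbf{x}')=\frac{1}{|\mathbf{X}\Delta\mathbf{X}^T+I_{pd}|^{\frac d2}\,\big|\mathbf{Y}\big(\Delta-\Delta\mathbf{X}^T(\mathbf{X}\Delta\mathbf{X}^T+I_{pd})^{-1}\mathbf{X}\Delta\big)\mathbf{Y}^T+I_d\big|^{\frac{1+\lambda}{2}}}.$$ Let $\alpha=\frac{1+\lambda}{d}$. Then $$k(\mathbf{x},\mathbf{x}')=\Big(|\mathbf{X}^T\mathbf{X}\Delta+I_N|^{1-\alpha}\,|\mathbf{X}^T\mathbf{X}\Delta+\mathbf{Y}^T\mathbf{Y}\Delta+I_N|^{\alpha}\Big)^{-\frac d2}.$$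
   Context: $|M|$ denotes the determinant of a square matrix $M$ and $I_m$ the $m\times m$ identity. For a time series $\mathbf{x}=(x_1,\dots,x_n)$ in $\mathbb{R}^d$ with $n>p$: $X\in\mathbb{R}^{pd\times(n-p)}$ is the matrix whose $i$-th column ($i=1,\dots,n-p$) is the stacked vector $(x_i;x_{i+1};\dots;x_{i+p-1})\in\mathbb{R}^{pd}$, and $Y\in\mathbb{R}^{d\times(n-p)}$ is the matrix whose $i$-th column is $x_{p+i}$, i.e. $Y=[x_{p+1},\dots,x_n]$. $X',Y'$ are defined in the same way from $\mathbf{x}'$ (with $n'-p$ columns). *)

From HB Require Import structures.
From mathcomp Require Import all_boot all_order all_algebra.
From mathcomp Require Import reals exp.
Set Implicit Arguments. Unset Strict Implicit. Unset Printing Implicit Defensive.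
Import Order.TTheory GRing.Theory Num.Theory.
Local Open Scope ring_scope.

Section AR.
Variable R : realType.

(* A time series x = (x_0,...,x_{n-1}) in R^d (0-indexed version of x_1..x_n).
   tsget x k r = r-th coordinate of x_k (0 outside the range; never used
   out of range under the hypotheses p < n). *)
Definition tsget (d n : nat) (x : 'I_n -> 'cV[R]_d) (k r : nat) : R :=
  match @insub nat (fun k => (k < n)%N) _ k, @insub nat (fun r => (r < d)%N) _ r with
  | Some k', Some r' => x k' r' ord0
  | _, _ => 0
  end.

(* X in R^{pd x (n-p)}: column i is the stacked vector (x_i; ...; x_{i+p-1});
   row index a = k*d + r (0 <= k < p, 0 <= r < d) holds coordinate r of x_{i+k}. *)
Definition arX (d p n : nat) (x : 'I_n -> 'cV[R]_d) : 'M[R]_(p * d, n - p) :=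
  \matrix_(a < p * d, i < n - p) tsget x (i + a %/ d) (a %% d).

Definition arY (d p n : nat) (x : 'I_n -> 'cV[R]_d) : 'M[R]_(d, n - p) :=
  \matrix_(r < d, i < n - p) tsget x (p + i) r.

Definition arDelta (n n' p : nat) : 'M[R]_((n - p) + (n' - p)) :=
  diag_mx (row_mx (const_mx (1 / (2 * (n - p)%:R)) : 'rV[R]_(n - p))
                  (const_mx (1 / (2 * (n' - p)%:R)) : 'rV[R]_(n' - p))).

Definition ar_kernel (d p n n' : nat) (lambda : R)
    (x : 'I_n -> 'cV[R]_d) (x' : 'I_n' -> 'cV[R]_d) : R :=
  let bX := row_mx (arX p x) (arX p x') in
  let bY := row_mx (arY p x) (arY p x') in
  let D := arDelta n n' p in
  let M := bX *m D *m bX^T + 1%:M in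
  1 / (powR (\det M) (d%:R / 2) *
       powR (\det (bY *m (D - D *m bX^T *m invmx M *m bX *m D) *m bY^T + 1%:M))
            ((1 + lambda) / 2)).

End AR.

From HB Require Import structures.
From mathcomp Require Import all_boot all_order all_algebra.
From mathcomp Require Import reals exp.
Set Implicit Arguments.
Unset Strict Implicit.
Unset Printing Implicit Defensive.
Import Order.TTheory GRing.Theory Num.Theory.
Local Open Scope ring_scope.

(* Writing A = X D X^T + I and S = D - D X^T A^-1 X D for the Schur
   complement, the push-through identity gives S (X^T X D + I) = D, whence
   X^T X D + Y^T Y D + I = (I + Y^T Y S)(X^T X D + I).  Sylvester's identity
   det (I + P Q) = det (I + Q P) turns both factors into determinants of the
   small matrices A and Y S Y^T + I of the kernel, so that
   det (X^T X D + Y^T Y D + I) = det A * det (Y S Y^T + I).  Both determinants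
   are positive because the matrices are I plus a positive semidefinite
   matrix, and the claimed identity is then arithmetic with real powers.
   Nothing about the time-series structure of X and Y is used. *)

Section DeterminantIdentities.
Variable R : comUnitRingType.

Lemma det_add1_mulmxC m n (P : 'M[R]_(m, n)) (Q : 'M[R]_(n, m)) :
  \det (1%:M + P *m Q) = \det (1%:M + Q *m P).
Proof.
pose M := block_mx 1%:M (- P) Q 1%:M.
have lM : block_mx 1%:M P 0 1%:M *m M = block_mx (1%:M + P *m Q) 0 Q 1%:M.
  by rewrite mulmx_block !mul1mx !mulmx1 !mul0mx !add0r addNr.
have Mr : M *m block_mx 1%:M P 0 1%:M = block_mx 1%:M 0 Q (1%:M + Q *m P).
  by rewrite mulmx_block !mul1mx !mulmx1 !mulmx0 !addr0 subrr addrC.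
have := congr1 determinant lM; have := congr1 determinant Mr.
by rewrite !det_mulmx !det_ublock !det_lblock !det1 !mul1r !mulr1 => <- ->.
Qed.

Lemma mulmx_add1_pushthrough m n (P : 'M[R]_(m, n)) (Q : 'M[R]_(n, m)) :
  P *m Q + 1%:M \in unitmx ->
  invmx (P *m Q + 1%:M) *m P *m (Q *m P + 1%:M) = P.
Proof.
have pushP : P *m (Q *m P + 1%:M) = (P *m Q + 1%:M) *m P.
  by rewrite mulmxDr mulmxDl mulmxA mulmx1 mul1mx.
by move=> Aunit; rewrite -mulmxA pushP mulmxA mulVmx // mul1mx.
Qed.

Lemma det_trmx_mul_add1 k N (X : 'M[R]_(k, N)) (D : 'M[R]_N) :
  \det (X^T *m X *m D + 1%:M) = \det (X *m D *m X^T + 1%:M).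
Proof. by rewrite addrC -mulmxA det_add1_mulmxC addrC. Qed.

Lemma det_add_mul_schur k l N (X : 'M[R]_(k, N)) (Y : 'M[R]_(l, N))
    (D : 'M[R]_N) :
  let A := X *m D *m X^T + 1%:M in
  A \in unitmx ->
  \det (X^T *m X *m D + Y^T *m Y *m D + 1%:M) =
  \det A * \det (Y *m (D - D *m X^T *m invmx A *m X *m D) *m Y^T + 1%:M).
Proof.
move=> A Aunit; pose S := D - D *m X^T *m invmx A *m X *m D.
have schurS : S *m (X^T *m X *m D + 1%:M) = D.
  rewrite /S.
  have push := @mulmx_add1_pushthrough _ _ (X *m D) X^T Aunit.
  have -> : D *m X^T *m invmx A *m X *m D =
            D *m X^T *m (invmx A *m (X *m D)) by rewrite !mulmxA.
  rewrite mulmxBl -(mulmxA (D *m X^T)) -(mulmxA X^T X D) push.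
  by rewrite mulmxDr mulmx1 !mulmxA [_ + D]addrC addrK.
have -> : X^T *m X *m D + Y^T *m Y *m D + 1%:M =
          (1%:M + Y^T *m (Y *m S)) *m (X^T *m X *m D + 1%:M).
  set Z := X^T *m X *m D + 1%:M.
  by rewrite mulmxDl mul1mx -!mulmxA schurS !mulmxA /Z addrAC.
by rewrite det_mulmx det_add1_mulmxC det_trmx_mul_add1 mulrC [1%:M + _]addrC.
Qed.

End DeterminantIdentities.

Section PositiveSemidefinite.
Variable R : rcfType.

Definition psdmx {n} (M : 'M[R]_n) :=
  forall v : 'rV[R]_n, 0 <= (v *m M *m v^T) 0 0.

Lemma mulmx_tr_gt0 n (v : 'rV[R]_n) : v != 0 -> 0 < (v *m v^T) 0 0.
Proof.
move=> v0; rewrite mxE (eq_bigr (fun j => v 0 j ^+ 2)) => [|j _]; last first.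
  by rewrite !mxE expr2.
rewrite lt_def sumr_ge0 ?andbT => [|j _]; last exact: sqr_ge0.
rewrite psumr_eq0 => [|j _]; last exact: sqr_ge0.
apply: contra v0 => /allP v2_0; apply/eqP/rowP => j.
by rewrite mxE; apply/eqP; rewrite -sqrf_eq0; exact: v2_0 (mem_index_enum j).
Qed.

Lemma psdmxZ n (t : R) (M : 'M[R]_n) : 0 <= t -> psdmx M -> psdmx (t *: M).
Proof. by move=> t0 psdM v; rewrite -scalemxAr -scalemxAl mxE mulr_ge0. Qed.

Lemma psdmx_mul_diag_tr k N (Z : 'M[R]_(k, N)) (w : 'rV[R]_N) :
  (forall j, 0 <= w 0 j) -> psdmx (Z *m diag_mx w *m Z^T).
Proof.
move=> w0 v; rewrite !mulmxA -(mulmxA _ Z^T) -trmx_mul mul_mx_diag mxE.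
apply: sumr_ge0 => j _; rewrite !mxE.
by rewrite mulrAC mulr_ge0 // -expr2 sqr_ge0.
Qed.

Lemma det_add1_psd_neq0 n (M : 'M[R]_n) : psdmx M -> \det (1%:M + M) != 0.
Proof.
move=> psdM; apply/negP => /det0P[v v0 /(congr1 (mulmx^~ v^T))].
rewrite mul0mx mulmxDr mulmx1 mulmxDl => /(congr1 (fun B : 'M[R]_1 => B 0 0)).
rewrite [(_ + _ : 'M[R]_1) _ _]mxE [(0 : 'M[R]_1) _ _]mxE => /eqP; apply/negP.
by rewrite gt_eqF // ltr_wpDr ?mulmx_tr_gt0 ?psdM.
Qed.

(* det (1 + t M) is a polynomial in t that equals 1 at t = 0 and never
   vanishes on [0, 1], so it stays positive by the intermediate value
   theorem. *)
Lemma det_add1_psd_gt0 n (M : 'M[R]_n) : psdmx M -> 0 < \det (1%:M + M).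
Proof.
move=> psdM; pose h : {poly R} := \det (1%:M + 'X *: map_mx polyC M).
have hE t : h.[t] = \det (1%:M + t *: M).
  rewrite -horner_evalE -det_map_mx map_mxD map_mxZ map_mx1 /=.
  rewrite horner_evalE hornerX; congr (\det (_ + _ *: _)).
  by apply/matrixP => i j; rewrite !mxE horner_evalE hornerC.
rewrite -[M]scale1r -hE ltNge; apply/negP => h1_le0.
have [|t /andP[t0 _] /rootP/eqP] := @poly_ivt R (- h) 0 1 ler01.
  by rewrite !hornerN hE scale0r addr0 det1 oppr_ge0 h1_le0 lerN10.
by rewrite hornerN hE oppr_eq0; apply/negP/det_add1_psd_neq0/psdmxZ.
Qed.

End PositiveSemidefinite.

Lemma det_mul_arDelta_add1_gt0 (R : realType) n n' p k
    (Z : 'M[R]_(k, n - p + (n' - p))) :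
  0 < \det (Z *m arDelta R n n' p *m Z^T + 1%:M).
Proof.
rewrite addrC; apply/det_add1_psd_gt0/psdmx_mul_diag_tr => j.
by rewrite mxE; case: splitP => i _; rewrite mxE divr_ge0 ?mulr_ge0 ?ler0n.
Qed.

Lemma powRB1_mul (R : realType) (a c r : R) : 0 < a -> 0 <= c ->
  a `^ (1 - r) * (a * c) `^ r = a * c `^ r.
Proof.
move=> a_gt0 c_ge0; rewrite powRM ?(ltW a_gt0) // mulrA.
rewrite -powRD ?(gt_eqF a_gt0) ?implybT //.
by rewrite subrK powRr1 // ltW.
Qed.

Theorem proposition1 (R : realType) (d p n n' : nat) (lambda : R)
    (x : 'I_n -> 'cV[R]_d) (x' : 'I_n' -> 'cV[R]_d) :
  (1 <= d)%N -> (1 <= p)%N -> 0 < lambda -> (p < n)%N -> (p < n')%N ->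
  let bX := row_mx (arX p x) (arX p x') in
  let bY := row_mx (arY p x) (arY p x') in
  let D := arDelta R n n' p in
  let alpha := (1 + lambda) / d%:R in
  ar_kernel p lambda x x' =
  powR (powR (\det (bX^T *m bX *m D + 1%:M)) (1 - alpha) *
        powR (\det (bX^T *m bX *m D + bY^T *m bY *m D + 1%:M)) alpha)
       (- (d%:R / 2)).
Proof.
move=> d_gt0 _ _ _ _ bX bY D alpha.
set A := bX *m D *m bX^T + 1%:M.
have A_gt0 : 0 < \det A := det_mul_arDelta_add1_gt0 bX.
have Aunit : A \in unitmx by rewrite unitmxE unitfE gt_eqF.
have E_gt0 : 0 < \det (bX^T *m bX *m D + bY^T *m bY *m D + 1%:M).
  rewrite -mulmxDl -mul_row_col -tr_col_mx det_trmx_mul_add1.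
  exact: det_mul_arDelta_add1_gt0 (col_mx bX bY).
rewrite det_trmx_mul_add1 det_add_mul_schur // -/A in E_gt0 *.
rewrite /ar_kernel; cbv zeta; rewrite -/bX -/bY -/D -/A.
set c := \det (bY *m _ *m bY^T + 1%:M) in E_gt0 *.
have c_gt0 : 0 < c by rewrite -(pmulr_rgt0 _ A_gt0).
rewrite (powRB1_mul alpha A_gt0 (ltW c_gt0)).
rewrite (powRM _ (ltW A_gt0) (powR_ge0 _ _)) -powRrM mulrN !powRN.
have -> : alpha * (d%:R / 2) = (1 + lambda) / 2.
  by rewrite /alpha mulrA divfK // pnatr_eq0 -lt0n.
by rewrite div1r invfM.
Qed.
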